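(* Let $P$ be a connected shrub on a finite set $I$ with at least two elements. Let $S$ be the set of vertices of height $1$ that cover every vertex of height $0$. In the graph obtained from the underlying graph of $P$ by removing all edges between elements of $S$ and vertices of height $0$, no vertex of $S$ lies in the same connected component as a vertex of height $0$.
   Context: A shrub $P$ on a finite set $I$ is a set $E$ of edges (unordered pairs $\{i,j\}$ of distinct elements of $I$) together with a height function $h_P:I\to\mathbb{N}$. Say that $j$ covers $i$ if $\{i,j\}\in E$ and $h_P(j)=h_P(i)+1$. The axioms are: (1) if $\{i,j\}\in E$ then $h_P(i)=h_P(j)\pm 1$; (2) if $h_P(j)>0$ then there is an edge $\{i,j\}$ with $h_P(i)=h_P(j)-1$; (3) there are no four distinct vertices $a,b,c,d$ such that $a$ covers $b$ and $c$, $c$ covers $d$, and $\{b,d\}\notin E$; (4) there are no five distinct vertices $a,b,c,d,e$ such that $a$ covers $c$ and $d$, $b$ covers $d$ and $e$, $\{a,e\}\notin E$ and $\{b,c\}\notin E$. A shrub is connected if its underlying graph $(I,E)$ is connected. *)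

From mathcomp Require Import all_boot.
Set Implicit Arguments. Unset Strict Implicit. Unset Printing Implicit Defensive.

(* A shrub on a finite type I: an edge relation E (symmetric, irreflexive,
   i.e. a set of unordered pairs of distinct elements) and a height h. *)
Section Shrub.
Variable I : finType.
Variables (E : rel I) (h : I -> nat).

(* j covers i *)
Definition covers (j i : I) : bool := E i j && (h j == (h i).+1).

Definition is_shrub : Prop :=
  symmetric E /\ irreflexive E /\
   (* (1) *) (forall i j, E i j -> h i = (h j).+1 \/ h j = (h i).+1) /\
   (* (2) *) (forall j, 0 < h j -> exists i, E i j /\ (h i).+1 = h j) /\
   (* (3) *) (forall a b c d : I, uniq [:: a; b; c; d] ->
                covers a b -> covers a c -> covers c d -> E b d) /\
   (* (4) *) (forall a b c d e : I, uniq [:: a; b; c; d; e] ->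
                covers a c -> covers a d -> covers b d -> covers b e ->
                E a e \/ E b c).

Definition connected_shrub : Prop := forall x y : I, connect E x y.

Definition S_set : {set I} :=
  [set s | (h s == 1) && [forall v, (h v == 0) ==> covers s v]].

Definition E_removed : rel I := fun x y =>
  E x y && ~~ (((x \in S_set) && (h y == 0)) || ((y \in S_set) && (h x == 0))).

End Shrub.

From mathcomp Require Import all_boot.
From mathcomp Require Import zify.

(* Call a vertex [x] S-guarded if [h x > 0] and every height-1 vertex
   reachable from [x] by going down along covers lies in [S].  Vertices of
   [S] are S-guarded and vertices of height 0 are not.  Axiom (3) says that
   two vertices covered by a common vertex cover the same vertices; with it,
   being S-guarded propagates along every edge that survives the removal, so
   it is constant on the components of the reduced graph. *)

Section Shrub.
Variable I : finType.
Variables (E : rel I) (h : I -> nat).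
Hypothesis E_sym : symmetric E.
Hypothesis E_height : forall i j, E i j -> h i = (h j).+1 \/ h j = (h i).+1.
Hypothesis covers_triangle : forall a b c d : I, uniq [:: a; b; c; d] ->
  covers E h a b -> covers E h a c -> covers E h c d -> E b d.

Local Notation S := (S_set E h).
Local Notation below := (connect (covers E h)).

Lemma coversE {x y} : covers E h x y -> h x = (h y).+1.
Proof. by case/andP=> _ /eqP. Qed.

Lemma S_height {s} : s \in S -> h s = 1.
Proof. by rewrite inE => /andP[/eqP]. Qed.

Lemma S_covers {s z} : s \in S -> h z = 0 -> covers E h s z.
Proof. by rewrite inE => /andP[_ /forallP/(_ z)/implyP] cov /eqP/cov. Qed.

Lemma below_height x w : below x w -> h w <= h x.
Proof.
case/connectP=> p + ->; elim: p x => //= y p IHp x /andP[/coversE hx /IHp].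
by rewrite hx => /leqW.
Qed.

Lemma below_inv x w :
  below x w -> w = x \/ exists2 d, covers E h x d & below d w.
Proof.
case/connectP=> [[|d p] /= pth ->]; [by left | right].
by case/andP: pth => cxd pth; exists d => //; apply/connectP; exists p.
Qed.

Lemma covers_sibling {y x x' d} :
  covers E h y x -> covers E h y x' -> covers E h x' d -> covers E h x d.
Proof.
move=> cyx cyx' cx'd; have [-> // | nxx'] := eqVneq x x'.
move: (coversE cyx) (coversE cyx') (coversE cx'd) => hy hy' hx'.
have ne a b : h a != h b -> a != b by apply: contra => /eqP->.
rewrite /covers E_sym (covers_triangle _ _ _ _ _ cyx cyx' cx'd) /=; last first.
  by rewrite !inE !negb_or nxx' !ne //; apply/eqP; lia.
by apply/eqP; lia.
Qed.

Lemma covers_sibling_S y x u :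
  covers E h y x -> covers E h y u -> x \in S -> u \in S.
Proof.
move=> cyx cyu xS.
have hu : h u = 1 by move: (coversE cyx) (coversE cyu) (S_height xS); lia.
rewrite inE hu eqxx; apply/forallP => z; apply/implyP => /eqP hz.
exact: covers_sibling cyu cyx (S_covers xS hz).
Qed.

Definition S_guarded x :=
  (0 < h x) && [forall w, below x w && (h w == 1) ==> (w \in S)].

Lemma S_guardedP x :
  reflect (0 < h x /\ forall w, below x w -> h w = 1 -> w \in S) (S_guarded x).
Proof.
apply: (iffP andP) => -[hx g]; split=> //.
  by move=> w bw /eqP hw; apply: (implyP (forallP g w)); rewrite bw hw.
by apply/forallP => w; apply/implyP => /andP[bw /eqP]; apply: g.
Qed.

Lemma S_guarded_S s : s \in S -> S_guarded s.
Proof.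
move=> sS; apply/S_guardedP.
split=> [|w /below_inv[-> // | [d csd /below_height hwd hw]]].
  by rewrite S_height.
by exfalso; move: (coversE csd) (S_height sS); lia.
Qed.

Lemma S_guarded_step x y : E_removed E h x y -> S_guarded x -> S_guarded y.
Proof.
case/andP=> Exy kept /S_guardedP[hx0 gx]; apply/S_guardedP.
case: (E_height _ _ Exy) => hxy.
  have cxy : covers E h x y by rewrite /covers E_sym Exy hxy eqxx.
  split=> [|w bw]; last exact/gx/(connect_trans (connect1 cxy) bw).
  rewrite lt0n; apply: contra kept => /eqP hy0.
  by rewrite gx ?connect0 ?hxy ?hy0.
have cyx : covers E h y x by rewrite /covers Exy hxy eqxx.
split=> [|w /below_inv[-> | [x' cyx' bx'w]] hw]; first by rewrite hxy.
  by exfalso; lia.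
have [wx' | nwx'] := eqVneq w x'.
  have hx1 : h x = 1.
    by move: (coversE cyx) (coversE cyx'); rewrite -wx' hw; lia.
  by rewrite wx'; apply: covers_sibling_S cyx cyx' (gx x (connect0 _ _) hx1).
case/below_inv: bx'w nwx' => [-> | [d cx'd bdw] _]; first by rewrite eqxx.
exact: gx (connect_trans (connect1 (covers_sibling cyx cyx' cx'd)) bdw) hw.
Qed.

Lemma S_guarded_closed : closed (E_removed E h) S_guarded.
Proof.
have sym : symmetric (E_removed E h).
  by move=> x y; rewrite /E_removed E_sym orbC.
by move=> x y exy; apply/idP/idP; apply: S_guarded_step; rewrite // sym.
Qed.

Lemma S_guarded_connect x y :
  connect (E_removed E h) x y -> S_guarded x = S_guarded y.
Proof. by move=> /(closed_connect S_guarded_closed). Qed.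

End Shrub.

Theorem mainTheorem2 (I : finType) (E : rel I) (h : I -> nat) :
  is_shrub E h -> connected_shrub E -> 2 <= #|I| ->
  forall s v : I, s \in S_set E h -> h v = 0 -> ~~ connect (E_removed E h) s v.
Proof.
move=> [E_sym [_ [E_height [_ [covers_triangle _]]]]] _ _ s v sS hv0.
apply/negP => /(@S_guarded_connect _ _ _ E_sym E_height covers_triangle).
by rewrite S_guarded_S // => /esym/andP[]; rewrite hv0.
Qed.
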